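(* Let $G,\Omega\in\{\mathbb{D},\mathbb{H}\}$, where $\mathbb{D}=\{z\in\mathbb{C}:|z|<1\}$ and $\mathbb{H}=\{z\in\mathbb{C}:\operatorname{Im}z>0\}$, let $f:G\to\Omega$ be a Möbius transformation of $G$ onto $\Omega$, and let $1\le p\le\infty$. Then $f:(G,b_{G,p})\to(\Omega,b_{\Omega,p})$ is $L$-Lipschitz, i.e. $b_{\Omega,p}(f(z_1),f(z_2))\le L\,b_{G,p}(z_1,z_2)$ for all $z_1,z_2\in G$, with $L=2^{2-1/p}$ if $G=\mathbb{D}$ and $L=2^{1-1/p}$ if $G=\mathbb{H}$ (with $1/p=0$ when $p=\infty$).
   Context: For a domain $G\subsetneq\mathbb{C}$, $z_1,z_2\in G$ and $1\le p<\infty$, $b_{G,p}(z_1,z_2)=\sup_{z\in\partial G}\frac{|z_1-z_2|}{\sqrt[p]{|z_1-z|^p+|z-z_2|^p}}$, and $b_{G,\infty}(z_1,z_2)=\sup_{z\in\partial G}\frac{|z_1-z_2|}{\max\{|z_1-z|,|z_2-z|\}}$. *)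

From mathcomp Require Import all_boot all_order all_algebra.
From mathcomp Require Import all_classical all_reals all_analysis.
From mathcomp Require Export complex.
Set Implicit Arguments. Unset Strict Implicit. Unset Printing Implicit Defensive.
Import Order.TTheory GRing.Theory Num.Theory.
Local Open Scope ring_scope.
Local Open Scope classical_set_scope.

Section Defs.
Variable R : realType.
Local Notation C := R[i].

Definition cabs (z : C) : R := Normc.normc z.

Definition cboundary (A : set C) : set C :=
  [set z | forall e : R, 0 < e ->
     (exists a, A a /\ cabs (z - a) < e) /\
     (exists b, ~ A b /\ cabs (z - b) < e)].

Definition unit_disk : set C := [set z | cabs z < 1].
Definition upper_half_plane : set C := [set z | 0 < Im z].

(* p in [1, +oo] is encoded as an extended real; the quotient
   |z1 - z2| / ||(|z1 - z|, |z - z2|)||_p for a boundary point z *)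
Definition bquot (p : \bar R) (z1 z2 z : C) : R :=
  match p with
  | (r%:E)%E => cabs (z1 - z2) /
      powR (powR (cabs (z1 - z)) r + powR (cabs (z - z2)) r) r^-1
  | _ => cabs (z1 - z2) / Num.max (cabs (z1 - z)) (cabs (z2 - z))
  end.

Definition bGp (G : set C) (p : \bar R) (z1 z2 : C) : R :=
  sup [set bquot p z1 z2 z | z in cboundary G].

Definition inv_ext (p : \bar R) : R :=
  match p with (r%:E)%E => r^-1 | _ => 0 end.

Definition mobius_onto (G Om : set C) (f : C -> C) : Prop :=
  (exists a b c d : C, a * d - b * c != 0 /\
     forall z, G z -> c * z + d != 0 /\ f z = (a * z + b) / (c * z + d)) /\
  set_bij G Om f.

End Defs.

(* Both b_{G,p} and the Mobius-invariant quantity th(rho_G/2) are controlled by the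
   sums |z1 - w| + |w - z2| over boundary points w.  The triangle inequality bounds
   every such sum from below by the denominator of th(rho_G/2), and one boundary point
   (the radial projection of z1 + z2 for the disk, the point where the segment
   [z1, conj z2] crosses the real axis for the half-plane) brings the sum down to at
   most 2, resp. 1, times that denominator.  Since the l^p norm of a pair (a, b) lies
   between 2^(1/p - 1) (a + b) and a + b, this gives
     th(rho_G/2) / c_G <= b_{G,p} <= 2^(1 - 1/p) th(rho_G/2),  c_D = 2, c_H = 1.
   A Mobius map f = (az+b)/(cz+d) of G onto Omega preserves th(rho/2): |cz+d|^2 times
   the defining function of Omega at f(z) is a real function A|z|^2 + B Re z + C Im z + D
   that is positive exactly on G, hence a positive multiple of the defining function
   of G, and its discriminant fixes the multiple. *)

From mathcomp Require Import all_boot all_order all_algebra.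
From mathcomp Require Import all_classical all_reals all_analysis.
From mathcomp Require Import complex ring lra.
Import Order.TTheory GRing.Theory Num.Theory.

Set Implicit Arguments.
Unset Strict Implicit.
Unset Printing Implicit Defensive.

Local Open Scope ring_scope.
Local Open Scope classical_set_scope.
Local Open Scope complex_scope.

Section RealInequalities.
Variable R : realFieldType.
Implicit Types A B C D : R.

Lemma quadratic_le0_lead_le0 A B D :
  (forall x, A * x ^+ 2 + B * x + D <= 0) -> A <= 0.
Proof.
move=> h; rewrite leNgt; apply/negP => A_gt0.
pose t := 1 + (`|D| + 1) / A.
have t_ge1 : 1 <= t by rewrite lerDl divr_ge0 ?addr_ge0 // ltW.
have At : A * t = A + (`|D| + 1) by rewrite mulrDr mulr1 mulrCA divff ?gt_eqF ?mulr1.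
have : 0 <= A * t * (t - 1).
  by rewrite At; apply: mulr_ge0; have := normr_ge0 D; lra.
have := h t; have := h (- t); have := ler_norm (- D); rewrite normrN.
nra.
Qed.

Lemma affine_le0_slope B D : (forall x, B * x + D <= 0) -> B = 0.
Proof.
move=> h; apply/eqP/negPn/negP => B_neq0.
by have := h ((1 - D) / B); rewrite mulrC divfK //; lra.
Qed.

Lemma quadratic_ge0_at1 A B D :
  (forall t, 0 <= t < 1 -> 0 < A * t ^+ 2 + B * t + D) -> 0 <= A + B + D.
Proof.
move=> h; rewrite leNgt; apply/negP => v_lt0.
set v := A + B + D in v_lt0.
pose K := `|2 * A + B| + `|A| + 1.
have K_gt0 : 0 < K by rewrite ltr_pwDr // addr_ge0.
pose d := - v / (K - v).
have d_gt0 : 0 < d by rewrite divr_gt0 ?oppr_gt0 //; lra.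
have dK : d * (K - v) = - v by rewrite divfK // gt_eqF //; lra.
have d_lt1 : d < 1 by rewrite ltr_pdivrMr ?mul1r; lra.
have t_in : 0 <= 1 - d < 1 by apply/andP; split; lra.
(* At [t = 1 - d] the quadratic is at most [v + d (K - 1) = d (v - 1) < 0]. *)
have := h _ t_in; have -> : A * (1 - d) ^+ 2 + B * (1 - d) + D
    = v - d * (2 * A + B) + A * d ^+ 2 by rewrite /v; ring.
have lin : - (d * (2 * A + B)) <= d * `|2 * A + B|.
  by rewrite -mulrN ler_wpM2l ?(ltW d_gt0) // -[X in _ <= X]normrN ler_norm.
have quad : A * d ^+ 2 <= `|A| * d.
  apply: le_trans (ler_wpM2r (sqr_ge0 d) (ler_norm A)) _.
  by rewrite ler_wpM2l // expr2 ger_pMl //; lra.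
move: dK; rewrite /K; nra.
Qed.

Lemma halfplane_positivity A B C D :
  (forall x y, 0 < y <-> 0 < A * (x ^+ 2 + y ^+ 2) + B * x + C * y + D) ->
  [/\ A = 0, B = 0, D = 0 & 0 < C].
Proof.
move=> h.
have axis x : A * x ^+ 2 + B * x + D <= 0.
  rewrite leNgt; apply/negP => pos.
  by have := proj2 (h x 0); rewrite expr0n /= addr0 mulr0 addr0 ltxx => /(_ pos).
have A0 : A = 0.
  apply/eqP; rewrite eq_le (quadratic_le0_lead_le0 axis) -oppr_le0.
  apply: (@quadratic_le0_lead_le0 _ (- B) (- (A + C + D))) => x.
  by have := proj1 (h x 1) ltr01; rewrite expr1n; lra.
have B0 : B = 0.
  by apply: (@affine_le0_slope _ D) => x; have := axis x; rewrite A0 mul0r add0r.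
have vertical y : 0 < y -> 0 < C * y + D.
  by move=> /(proj1 (h 0 y)); rewrite A0 B0 !mul0r !add0r.
have D_le0 : D <= 0 by have := axis 0; rewrite A0 B0 !mul0r !add0r.
have C_gt0 : 0 < C by have := vertical 1 ltr01; lra.
suff D0 : D = 0 by [].
apply/eqP; rewrite eq_le D_le0 leNgt; apply/negP => D_lt0.
have := vertical (- D / (2 * C)); rewrite divr_gt0 ?mulr_gt0 ?oppr_gt0 //.
have -> : C * (- D / (2 * C)) + D = D / 2 by field; rewrite gt_eqF.
by move=> /(_ isT); lra.
Qed.

Lemma disk_positivity A B C D :
  (forall x y, x ^+ 2 + y ^+ 2 < 1 <-> 0 < A * (x ^+ 2 + y ^+ 2) + B * x + C * y + D) ->
  [/\ B = 0, C = 0, A = - D & 0 < D].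
Proof.
move=> h.
have center : 0 < D.
  by have := proj1 (h 0 0); rewrite expr0n /= addr0 !mulr0 !addr0 add0r; apply.
have circle x y : x ^+ 2 + y ^+ 2 = 1 -> A + B * x + C * y + D = 0.
  move=> xy1; apply/eqP; rewrite eq_le; apply/andP; split.
    rewrite leNgt; apply/negP => pos.
    by have := proj2 (h x y); rewrite xy1 mulr1 ltxx => /(_ pos).
  rewrite -(addrA A (B * x)); apply: quadratic_ge0_at1 => t /andP[t_ge0 t_lt1].
  have := proj1 (h (t * x) (t * y)); rewrite !exprMn -mulrDr xy1 mulr1.
  have -> : A * t ^+ 2 + B * (t * x) + C * (t * y) + D
      = A * t ^+ 2 + (B * x + C * y) * t + D by ring.
  by apply; nra.
have := circle 1 0; have := circle (-1) 0; have := circle 0 1.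
rewrite expr1n sqrrN expr1n expr0n /= addr0 add0r; move=> /(_ erefl) + /(_ erefl) + /(_ erefl).
split; lra.
Qed.

Lemma disk_sum_ineq (r1 r2 mu : R) : 0 <= r1 <= 1 -> 0 <= r2 <= 1 -> 0 <= mu <= r1 + r2 ->
  2 * mu ^+ 2 - 2 * mu <= r1 ^+ 2 + r2 ^+ 2 + 2 * (r1 ^+ 2 * r2 ^+ 2).
Proof.
move=> /andP[r1_ge0 r1_le1] /andP[r2_ge0 r2_le1] /andP[mu_ge0 mu_le].
have gap : r1 ^+ 2 + r2 ^+ 2 + 2 * (r1 ^+ 2 * r2 ^+ 2) - (2 * (r1 + r2) ^+ 2 - 2 * (r1 + r2))
    = (r1 + r2 - 2 * r1 * r2) ^+ 2 + 2 * ((1 - r1) * (1 - r2)) * (r1 + r2 - r1 * r2) by ring.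
have : 0 <= (1 - r1) * (1 - r2) * (r1 + r2 - r1 * r2) by rewrite !mulr_ge0 ?subr_ge0 //; nra.
have := sqr_ge0 (r1 + r2 - 2 * r1 * r2).
by have [mu_le1|mu_gt1] := lerP mu 1; nra.
Qed.

Lemma div_le_scale (N M D K : R) : 0 <= N -> 0 < D -> 0 < K -> D <= K * M ->
  N / M <= K * (N / D).
Proof.
move=> N_ge0 D_gt0 K_gt0 DM; have M_gt0 : 0 < M by rewrite -(pmulr_rgt0 _ K_gt0); lra.
rewrite ler_pdivrMr // (_ : K * (N / D) * M = N / D * (K * M)); last by ring.
by apply: le_trans (ler_wpM2l (divr_ge0 N_ge0 (ltW D_gt0)) DM); rewrite divfK ?gt_eqF.
Qed.
End RealInequalities.

Section PairPowerNorm.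
Variable R : realType.
Implicit Types a b r : R.

Lemma powR_superadd a b r : 0 <= a -> 0 <= b -> 1 <= r ->
  powR a r + powR b r <= powR (a + b) r.
Proof.
move=> a_ge0 b_ge0 r_ge1; have r_neq0 : r != 0 by rewrite gt_eqF // (lt_le_trans ltr01).
have [s0|s_neq0] := eqVneq (a + b) 0.
  have [-> ->] : a = 0 /\ b = 0 by split; lra.
  by rewrite addr0 powR0.
have s_gt0 : 0 < a + b by rewrite lt_neqAle eq_sym s_neq0 addr_ge0.
have part x : 0 <= x <= a + b -> powR x r <= x / (a + b) * powR (a + b) r.
  move=> /andP[x_ge0 x_le]; have [->|x_neq0] := eqVneq x 0; first by rewrite powR0 // mul0r.
  rewrite -{1}(divfK s_neq0 x); apply: ge1r_powRZ (ltW s_gt0) r_ge1.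
  by rewrite divr_gt0 ?ler_pdivrMr ?mul1r // lt_neqAle eq_sym x_neq0.
apply: le_trans (lerD (part a _) (part b _)) _; try (apply/andP; split; lra).
by rewrite -!mulrDl divff ?mul1r.
Qed.

(* The l^p norm of (a, b); the excluded p = -oo falls into the [max] branch. *)
Definition pnorm2 (p : \bar R) a b : R :=
  match p with
  | (r%:E)%E => powR (powR a r + powR b r) r^-1
  | _ => Num.max a b
  end.

Lemma pnorm2_le_add p a b : (1 <= p)%E -> 0 <= a -> 0 <= b -> pnorm2 p a b <= a + b.
Proof.
case: p => [r| |] //=; rewrite ?lee_fin => r_ge1 a_ge0 b_ge0; last first.
  by rewrite ge_max lerDl lerDr a_ge0 b_ge0.
have r_gt0 : 0 < r by apply: lt_le_trans ltr01 r_ge1.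
apply: le_trans (ge0_ler_powR _ _ _ (powR_superadd a_ge0 b_ge0 r_ge1)) _.
- by rewrite invr_ge0 ltW.
- by rewrite nnegrE addr_ge0 ?powR_ge0.
- by rewrite nnegrE powR_ge0.
by rewrite -powRrM divff ?gt_eqF // powRr1 // addr_ge0.
Qed.

Lemma add_le_pnorm2 p a b : (1 <= p)%E -> 0 <= a -> 0 <= b ->
  a + b <= powR 2 (1 - inv_ext p) * pnorm2 p a b.
Proof.
case: p => [r| |] //=; rewrite ?lee_fin => r_ge1 a_ge0 b_ge0; last first.
  by rewrite subr0 powRr1 // mulr_natl mulr2n lerD // le_max lexx ?orbT.
have [->|r_neq1] := eqVneq r 1.
  by rewrite invr1 subrr powRr0 mul1r !powRr1 ?addr_ge0.
have r_gt1 : 1 < r by rewrite lt_neqAle eq_sym r_neq1.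
have r_gt0 : 0 < r by apply: lt_le_trans ltr01 r_ge1.
pose q := r / (r - 1).
have q_gt0 : 0 < q by rewrite divr_gt0 // subr_gt0.
have conj : r^-1 + q^-1 = 1 by rewrite invf_div; field; rewrite gt_eqF.
(* Hoelder's inequality against the vector (1, 1) *)
have := hoelder2 a_ge0 b_ge0 ler01 ler01 r_gt0 q_gt0 conj.
rewrite !mulr1 powR1 mulrC.
by have -> : q^-1 = 1 - r^-1 by rewrite -conj addrC addKr.
Qed.

End PairPowerNorm.

Section HyperbolicDomains.
Variable R : realType.
Local Notation C := R[i].
Local Notation Re := (@complex.Re R).
Local Notation Im := (@complex.Im R).
Implicit Types (u v w z : C) (disk : bool).

Definition normc2 z : R := Re z ^+ 2 + Im z ^+ 2.

Lemma Re_add u v : Re (u + v) = Re u + Re v. Proof. by case: u; case: v. Qed.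
Lemma Im_add u v : Im (u + v) = Im u + Im v. Proof. by case: u; case: v. Qed.
Lemma Re_opp u : Re (- u) = - Re u. Proof. by case: u. Qed.
Lemma Im_opp u : Im (- u) = - Im u. Proof. by case: u. Qed.
Lemma Re_mul u v : Re (u * v) = Re u * Re v - Im u * Im v. Proof. by case: u; case: v. Qed.
Lemma Im_mul u v : Im (u * v) = Re u * Im v + Im u * Re v. Proof. by case: u; case: v. Qed.
Lemma Re_inv u : Re u^-1 = Re u / normc2 u. Proof. by case: u. Qed.
Lemma Im_inv u : Im u^-1 = - (Im u / normc2 u). Proof. by case: u. Qed.
Lemma Re_conj u : Re u^*%C = Re u. Proof. by case: u. Qed.
Lemma Im_conj u : Im u^*%C = - Im u. Proof. by case: u. Qed.
Lemma Re_cplx (x y : R) : Re (x +i* y)%C = x. Proof. by []. Qed.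
Lemma Im_cplx (x y : R) : Im (x +i* y)%C = y. Proof. by []. Qed.
Lemma Re1 : Re 1 = 1. Proof. by []. Qed.
Lemma Im1 : Im 1 = 0. Proof. by []. Qed.
Lemma Re0 : Re 0 = 0. Proof. by []. Qed.
Lemma Im0 : Im 0 = 0. Proof. by []. Qed.

Local Ltac coords := try rewrite /normc2; rewrite ?(Re_add, Im_add, Re_opp, Im_opp, Re_mul, Im_mul,
  Re_conj, Im_conj, Re_cplx, Im_cplx, Re1, Im1).

Lemma normc2_ge0 z : 0 <= normc2 z. Proof. by rewrite addr_ge0 ?sqr_ge0. Qed.
Lemma cabsE z : cabs z = Num.sqrt (normc2 z). Proof. by case: z. Qed.
Lemma cabs_ge0 z : 0 <= cabs z. Proof. by rewrite cabsE sqrtr_ge0. Qed.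
Lemma sqr_cabs z : cabs z ^+ 2 = normc2 z. Proof. by rewrite cabsE sqr_sqrtr ?normc2_ge0. Qed.
Lemma cabsD u v : cabs (u + v) <= cabs u + cabs v. Proof. exact: le_normcD. Qed.
Lemma cabsM u v : cabs (u * v) = cabs u * cabs v. Proof. exact: Normc.normcM. Qed.
Lemma cabsN u : cabs (- u) = cabs u. Proof. exact: normcN. Qed.
Lemma cabs_distC u v : cabs (u - v) = cabs (v - u). Proof. by rewrite -opprB cabsN. Qed.
Lemma cabs_real (x : R) : cabs x%:C = `|x|.
Proof. by rewrite cabsE /normc2 /= expr0n addr0 sqrtr_sqr. Qed.

Lemma cabs_le u v : normc2 u <= normc2 v -> cabs u <= cabs v.
Proof. by move=> uv; rewrite !cabsE ler_sqrt // normc2_ge0. Qed.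
Lemma cabs_leE z (e : R) : 0 <= e -> (cabs z <= e) = (normc2 z <= e ^+ 2).
Proof. by move=> e_ge0; rewrite cabsE -{1}(ger0_norm e_ge0) -sqrtr_sqr ler_sqrt // sqr_ge0. Qed.
Lemma cabs_ltE z (e : R) : 0 < e -> (cabs z < e) = (normc2 z < e ^+ 2).
Proof. by move=> e_gt0; rewrite cabsE -{1}(gtr0_norm e_gt0) -sqrtr_sqr ltr_sqrt // exprn_gt0. Qed.

Lemma normc2M u v : normc2 (u * v) = normc2 u * normc2 v.
Proof. by rewrite -!sqr_cabs cabsM exprMn. Qed.
Lemma normc2_conj u : normc2 u^* = normc2 u.
Proof. by rewrite /normc2 Re_conj Im_conj sqrrN. Qed.
Lemma normc2V u : normc2 u^-1 = (normc2 u)^-1.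
Proof. by rewrite -!sqr_cabs /cabs Normc.normcV exprVn. Qed.
Lemma cabs_gt0 z : z != 0 -> 0 < cabs z.
Proof.
move=> z_neq0; rewrite lt_neqAle cabs_ge0 andbT eq_sym.
by apply: contra z_neq0 => /eqP/Normc.eq0_normc ->.
Qed.
Lemma normc2_gt0 z : z != 0 -> 0 < normc2 z.
Proof. by move=> /cabs_gt0 z_gt0; rewrite -sqr_cabs exprn_gt0. Qed.
Lemma Im_le_cabs z : Im z <= cabs z.
Proof.
apply: le_trans (ler_norm _) _.
by rewrite cabsE -sqrtr_sqr ler_sqrt ?normc2_ge0 // lerDr sqr_ge0.
Qed.

Definition domain disk : set C := if disk then @unit_disk R else @upper_half_plane R.
Definition domain_fn disk z : R := if disk then 1 - normc2 z else Im z.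

Lemma domainE disk z : domain disk z <-> 0 < domain_fn disk z.
Proof.
case: disk; rewrite /domain /domain_fn /=.
  by rewrite /unit_disk /= cabs_ltE // expr1n subr_gt0.
by rewrite /upper_half_plane /= -complexIm ltcR.
Qed.

(* Signed distance to the boundary; unlike [domain_fn] it is 1-Lipschitz. *)
Definition bdist disk z : R := if disk then 1 - cabs z else Im z.
Definition inward_normal disk w : C := if disk then - w else 'i%C.

Lemma bdist_gt0E disk z : (0 < bdist disk z) = (0 < domain_fn disk z).
Proof.
by case: disk; rewrite /bdist /domain_fn // !subr_gt0 cabs_ltE // expr1n.
Qed.

Lemma bdist_eq0E disk z : bdist disk z = 0 <-> domain_fn disk z = 0.
Proof.
case: disk; rewrite /bdist /domain_fn //; split => /eqP; rewrite subr_eq0 => /eqP z1.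
  by rewrite -sqr_cabs -z1 expr1n subrr.
by apply/eqP; rewrite subr_eq0 -(eqrXn2 (n := 2)) ?cabs_ge0 // expr1n sqr_cabs -z1.
Qed.

Lemma bdist_lipschitz disk u v : bdist disk u <= bdist disk v + cabs (u - v).
Proof.
case: disk; rewrite /bdist; last by have := Im_le_cabs (u - v); rewrite Im_add Im_opp; lra.
have := cabsD u (v - u); rewrite addrC subrK cabs_distC; lra.
Qed.

Lemma bdist_normal disk w (t : R) : bdist disk w = 0 -> t <= 1 ->
  bdist disk (w + t%:C * inward_normal disk w) = t.
Proof.
case: disk; rewrite /bdist /inward_normal => w0 t_le1.
  have -> : w + t%:C * - w = (1 - t)%:C * w by rewrite rmorphB rmorph1; ring.
  have w1 : cabs w = 1 by lra.
  by rewrite cabsM cabs_real ger0_norm ?subr_ge0 // w1 mulr1; lra.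
by rewrite Im_add Im_mul /= w0; lra.
Qed.

Lemma cabs_normal disk w (t : R) : bdist disk w = 0 -> cabs (t%:C * inward_normal disk w) = `|t|.
Proof.
case: disk; rewrite /bdist /inward_normal cabsM cabs_real => w0.
  by rewrite cabsN (_ : cabs w = 1) ?mulr1 //; lra.
by rewrite cabsE /normc2 /= expr0n expr1n add0r sqrtr1 mulr1.
Qed.

Lemma cboundary_domain disk w : cboundary (domain disk) w <-> domain_fn disk w = 0.
Proof.
rewrite -bdist_eq0E; split => [bw | w0 e e_gt0].
  apply/eqP; rewrite eq_le !leNgt; apply/andP; split; apply/negP => hs.
    have [_ [v [v_out wv]]] := bw _ hs; apply: v_out.
    by rewrite domainE -bdist_gt0E; have := bdist_lipschitz disk w v; lra.
  move: hs; rewrite -oppr_gt0 => /bw [[v [v_in wv]] _].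
  move: v_in; rewrite domainE -bdist_gt0E.
  by have := bdist_lipschitz disk v w; rewrite cabs_distC; lra.
pose t := Num.min e 1 / 2.
have t_gt0 : 0 < t by rewrite divr_gt0 // lt_min e_gt0 ltr01.
have [t_lt_e t_lt1] : t < e /\ t < 1.
  have : Num.min e 1 <= e /\ Num.min e 1 <= 1 by rewrite !ge_min !lexx ?orbT.
  by move: t_gt0; rewrite /t; lra.
have near (s : R) : `|s| = t -> cabs (w - (w + s%:C * inward_normal disk w)) < e.
  by move=> st; rewrite -opprB addrC addKr cabsN cabs_normal // st.
split; [exists (w + t%:C * inward_normal disk w) | exists (w + (- t)%:C * inward_normal disk w)].
  split; last by apply: near; rewrite gtr0_norm.
  by rewrite domainE -bdist_gt0E bdist_normal //; lra.
split; last by apply: near; rewrite normrN gtr0_norm.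
by rewrite domainE -bdist_gt0E bdist_normal; lra.
Qed.

Lemma cabs_sub_conj w z : Im w = 0 -> cabs (w - z^*) = cabs (w - z).
Proof. by move=> w0; rewrite !cabsE; congr Num.sqrt; coords; rewrite w0; ring. Qed.

Definition kappa disk : R := if disk then 1 else 4.

(* [thrho disk z1 z2] is th(rho/2) for the hyperbolic distance rho of the domain. *)
Definition hden disk z1 z2 : R :=
  Num.sqrt (normc2 (z1 - z2) + kappa disk * (domain_fn disk z1 * domain_fn disk z2)).
Definition thrho disk z1 z2 : R := cabs (z1 - z2) / hden disk z1 z2.

Lemma hden_ge0 disk z1 z2 : 0 <= hden disk z1 z2. Proof. exact: sqrtr_ge0. Qed.

Lemma hden_gt0 disk z1 z2 : domain disk z1 -> domain disk z2 -> 0 < hden disk z1 z2.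
Proof.
move=> /domainE z1_in /domainE z2_in; rewrite sqrtr_gt0.
have kappa_gt0 : 0 < kappa disk by case: disk {z1_in z2_in}.
have := mulr_gt0 kappa_gt0 (mulr_gt0 z1_in z2_in).
by have := normc2_ge0 (z1 - z2); lra.
Qed.

Lemma hden_disk z1 z2 : hden true z1 z2 = cabs (1 - z1 * z2^*).
Proof. by rewrite /hden cabsE /kappa /domain_fn; congr Num.sqrt; coords; ring. Qed.

Lemma hden_halfplane z1 z2 : hden false z1 z2 = cabs (z1 - z2^*).
Proof. by rewrite /hden cabsE /kappa /domain_fn; congr Num.sqrt; coords; ring. Qed.

Lemma hden_le_boundary_sum disk z1 z2 w : domain disk z1 -> domain_fn disk w = 0 ->
  hden disk z1 z2 <= cabs (z1 - w) + cabs (w - z2).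
Proof.
case: disk => [|_ w0]; last first.
  rewrite hden_halfplane -(cabs_sub_conj z2 w0) (_ : z1 - z2^* = (z1 - w) + (w - z2^*)).
    exact: cabsD.
  by ring.
move=> /domainE; rewrite /domain_fn => z1_in w0.
rewrite hden_disk (_ : 1 - z1 * z2^* = (1 - z1 * w^*) + z1 * (w - z2)^*); last first.
  by rewrite rmorphB; ring.
apply: le_trans (cabsD _ _) (lerD _ _); apply: cabs_le.
  by move: w0; coords => w0; nra.
by rewrite normc2M normc2_conj; have := normc2_ge0 (w - z2); nra.
Qed.

Lemma bquotE p z1 z2 z :
  bquot p z1 z2 z = cabs (z1 - z2) / pnorm2 p (cabs (z1 - z)) (cabs (z - z2)).
Proof. by case: p => //= *; rewrite (cabs_distC z2). Qed.

Lemma bquot_le_thrho disk p z1 z2 w : (1 <= p)%E -> domain disk z1 -> domain disk z2 ->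
  domain_fn disk w = 0 -> bquot p z1 z2 w <= powR 2 (1 - inv_ext p) * thrho disk z1 z2.
Proof.
move=> p_ge1 z1_in z2_in w0; rewrite bquotE.
apply: div_le_scale (cabs_ge0 _) (hden_gt0 z1_in z2_in) (powR_gt0 _ _) _ => //.
apply: le_trans (hden_le_boundary_sum z2 z1_in w0) _.
exact: add_le_pnorm2 p_ge1 (cabs_ge0 _) (cabs_ge0 _).
Qed.

Lemma bGp_le_thrho disk p z1 z2 : (1 <= p)%E -> domain disk z1 -> domain disk z2 ->
  bGp (domain disk) p z1 z2 <= powR 2 (1 - inv_ext p) * thrho disk z1 z2.
Proof.
move=> p_ge1 z1_in z2_in; apply: ge_sup.
  exists (bquot p z1 z2 (if disk then 1 else 0)), (if disk then 1 else 0) => //.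
  apply/cboundary_domain; case: disk {z1_in z2_in}; rewrite /domain_fn //.
  by rewrite /normc2 Re1 Im1 expr1n expr0n addr0 subrr.
by move=> _ [w /cboundary_domain w0 <-]; exact: bquot_le_thrho.
Qed.

Lemma halfplane_boundary_sum_le z1 z2 : domain false z1 -> domain false z2 ->
  exists2 w, domain_fn false w = 0 & cabs (z1 - w) + cabs (w - z2) <= hden false z1 z2.
Proof.
rewrite !domainE /domain_fn => y1_gt0 y2_gt0.
(* [w] is where the segment from [z1] to [z2^*] crosses the real axis *)
pose s := Im z1 / (Im z1 + Im z2).
have s_ge0 : 0 <= s by rewrite divr_ge0 // ltW // addr_gt0.
have s_le1 : s <= 1 by rewrite ler_pdivrMr ?addr_gt0 // mul1r lerDl ltW.
have Im_s : s * (Im z1 + Im z2) = Im z1 by rewrite divfK // gt_eqF // addr_gt0.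
pose w := z1 - s%:C * (z1 - z2^*).
have w0 : Im w = 0 by rewrite /w; coords; rewrite mul0r addr0 opprK Im_s subrr.
exists w => //; rewrite hden_halfplane -(cabs_sub_conj _ w0).
rewrite (_ : z1 - w = s%:C * (z1 - z2^*)); last by rewrite /w; ring.
rewrite (_ : w - z2^* = (1 - s)%:C * (z1 - z2^*)); last by rewrite /w rmorphB rmorph1; ring.
by rewrite !cabsM !cabs_real !ger0_norm ?subr_ge0 // -mulrDl subrKC mul1r.
Qed.

Lemma unit_vector_along s : exists w, normc2 w = 1 /\ Re w * Re s + Im w * Im s = cabs s.
Proof.
have [->|s_neq0] := eqVneq s 0.
  exists 1; split; first by rewrite /normc2 Re1 Im1 expr1n expr0n addr0.
  by rewrite Re0 Im0 !mulr0 addr0 /cabs Normc.normc0.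
have cs_gt0 := cabs_gt0 s_neq0.
exists ((cabs s)^-1%:C * s); rewrite Re_mul Im_mul /= !mul0r subr0 addr0; split.
  by rewrite normc2M {1}/normc2 /= expr0n addr0 -sqr_cabs -exprMn mulVf ?gt_eqF ?expr1n.
by rewrite -!mulrA -mulrDr -!expr2 -[_ + _]sqr_cabs expr2 mulKf ?gt_eqF.
Qed.

Lemma disk_boundary_sum_le z1 z2 : domain true z1 -> domain true z2 ->
  exists2 w, domain_fn true w = 0 & cabs (z1 - w) + cabs (w - z2) <= 2 * hden true z1 z2.
Proof.
rewrite !domainE /domain_fn !subr_gt0 => z1_in z2_in.
have [w [w1 w_aligned]] := unit_vector_along (z1 + z2).
exists w; first by rewrite w1 subrr.
set mu := cabs (z1 + z2) in w_aligned.
have dist_sqr : cabs (z1 - w) ^+ 2 + cabs (w - z2) ^+ 2 = 2 + normc2 z1 + normc2 z2 - 2 * mu.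
  rewrite !sqr_cabs (_ : normc2 (z1 - w) + normc2 (w - z2) = normc2 z1 + normc2 z2
    + 2 * normc2 w - 2 * (Re w * Re (z1 + z2) + Im w * Im (z1 + z2))); last by coords; ring.
  by rewrite w1 w_aligned; ring.
have hden_sqr : hden true z1 z2 ^+ 2
    = 1 + normc2 z1 + normc2 z2 - mu ^+ 2 + normc2 z1 * normc2 z2.
  rewrite /hden /kappa /domain_fn mul1r sqr_sqrtr; last first.
    by rewrite addr_ge0 ?normc2_ge0 // mulr_ge0 // subr_ge0 ltW.
  by rewrite /mu sqr_cabs; coords; ring.
have r_in z : normc2 z < 1 -> 0 <= cabs z <= 1.
  by move=> z_in; rewrite cabs_ge0 cabs_leE // expr1n ltW.
have mu_in : 0 <= mu <= cabs z1 + cabs z2 by rewrite cabs_ge0 cabsD.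
have := disk_sum_ineq (r_in _ z1_in) (r_in _ z2_in) mu_in.
rewrite (sqr_cabs z1) (sqr_cabs z2) => key.
rewrite -(ler_pXn2r (n := 2)) // ?nnegrE ?addr_ge0 ?mulr_ge0 ?cabs_ge0 ?hden_ge0 //.
rewrite exprMn hden_sqr; have := sqr_ge0 (cabs (z1 - w) - cabs (w - z2)).
nra.
Qed.

Lemma thrho_le_bGp disk p z1 z2 : (1 <= p)%E -> domain disk z1 -> domain disk z2 ->
  thrho disk z1 z2 <= (if disk then 2 else 1) * bGp (domain disk) p z1 z2.
Proof.
move=> p_ge1 z1_in z2_in; set c : R := if disk then 2 else 1.
have c_gt0 : 0 < c by rewrite /c; case: (disk).
have [w w0 sum_le] : exists2 w, domain_fn disk w = 0 &
    cabs (z1 - w) + cabs (w - z2) <= c * hden disk z1 z2.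
  rewrite /c; case: (disk) z1_in z2_in => z1_in z2_in.
    exact: disk_boundary_sum_le.
  by rewrite mul1r; exact: halfplane_boundary_sum_le.
have norm_le := pnorm2_le_add p_ge1 (cabs_ge0 (z1 - w)) (cabs_ge0 (w - z2)).
have norm_ge := add_le_pnorm2 p_ge1 (cabs_ge0 (z1 - w)) (cabs_ge0 (w - z2)).
have norm_gt0 : 0 < pnorm2 p (cabs (z1 - w)) (cabs (w - z2)).
  have K_gt0 : 0 < powR 2 (1 - inv_ext p) by apply: powR_gt0.
  rewrite -(pmulr_rgt0 _ K_gt0); apply: lt_le_trans norm_ge.
  exact: lt_le_trans (hden_gt0 z1_in z2_in) (hden_le_boundary_sum z2 z1_in w0).
apply: le_trans (ler_wpM2l (ltW c_gt0) (_ : bquot p z1 z2 w <= _)).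
  rewrite bquotE /thrho; apply: div_le_scale (cabs_ge0 _) norm_gt0 c_gt0 _.
  exact: le_trans norm_le sum_le.
apply: ub_le_sup; last by exists w => //; apply/cboundary_domain.
exists (powR 2 (1 - inv_ext p) * thrho disk z1 z2) => _ [v /cboundary_domain v0 <-].
exact: bquot_le_thrho.
Qed.

Lemma thrho_scale disk disk' w1 w2 z1 z2 (k : R) : 0 < k ->
  normc2 (w1 - w2) = k * normc2 (z1 - z2) ->
  kappa disk' * (domain_fn disk' w1 * domain_fn disk' w2)
    = k * (kappa disk * (domain_fn disk z1 * domain_fn disk z2)) ->
  thrho disk' w1 w2 = thrho disk z1 z2.
Proof.
move=> k_gt0 dist_eq fn_eq; rewrite /thrho /hden !cabsE dist_eq fn_eq -mulrDr.
by rewrite !sqrtrM ?(ltW k_gt0) // -mulf_div divff ?mul1r // gt_eqF // sqrtr_gt0.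
Qed.

Section MobiusForm.
Variables a b c d : C.

Lemma mobius_sub z1 z2 : c * z1 + d != 0 -> c * z2 + d != 0 ->
  (a * z1 + b) / (c * z1 + d) - (a * z2 + b) / (c * z2 + d)
    = (a * d - b * c) * (z1 - z2) / ((c * z1 + d) * (c * z2 + d)).
Proof. by move=> q1 q2; field; rewrite q1 q2. Qed.

Lemma mobius_inj z1 z2 : a * d - b * c != 0 -> c * z1 + d != 0 -> c * z2 + d != 0 ->
  (a * z1 + b) / (c * z1 + d) = (a * z2 + b) / (c * z2 + d) -> z1 = z2.
Proof.
move=> det_neq0 q1 q2 f_eq; have := mobius_sub q1 q2; rewrite f_eq subrr => /esym/eqP.
rewrite !mulf_eq0 invr_eq0 mulf_eq0 (negbTE q1) (negbTE q2) (negbTE det_neq0) /=.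
by rewrite orbF subr_eq0 => /eqP.
Qed.

(* [domain_fn odisk (f z) * |c z + d|^2] for [f z = (a z + b) / (c z + d)], as a
   polynomial in [z]. *)
Definition mob_fn odisk z : R :=
  if odisk then normc2 (c * z + d) - normc2 (a * z + b)
  else Im ((a * z + b) * (c * z + d)^*).

Definition mobA odisk : R :=
  if odisk then normc2 c - normc2 a else Im a * Re c - Re a * Im c.
Definition mobB odisk : R :=
  if odisk then 2 * (Re c * Re d + Im c * Im d) - 2 * (Re a * Re b + Im a * Im b)
  else Im a * Re d + Im b * Re c - Re a * Im d - Re b * Im c.
Definition mobC odisk : R :=
  if odisk then 2 * (Re c * Im d - Im c * Re d) + 2 * (Im a * Re b - Re a * Im b)
  else Re a * Re d - Im b * Im c + Im a * Im d - Re b * Re c.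
Definition mobD odisk : R :=
  if odisk then normc2 d - normc2 b else Im b * Re d - Re b * Im d.

Lemma mob_fnE odisk (x y : R) : mob_fn odisk (x +i* y) =
  mobA odisk * (x ^+ 2 + y ^+ 2) + mobB odisk * x + mobC odisk * y + mobD odisk.
Proof. by case: odisk; rewrite /mob_fn /mobA /mobB /mobC /mobD; coords; ring. Qed.

Lemma mob_disc odisk :
  kappa odisk * (4 * mobA odisk * mobD odisk - (mobB odisk ^+ 2 + mobC odisk ^+ 2))
    = - 4 * normc2 (a * d - b * c).
Proof. by case: odisk; rewrite /kappa /mobA /mobB /mobC /mobD; coords; ring. Qed.

Lemma domain_fn_mobius odisk z : c * z + d != 0 ->
  domain_fn odisk ((a * z + b) / (c * z + d)) * normc2 (c * z + d) = mob_fn odisk z.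
Proof.
move=> q_neq0; have := normc2_gt0 q_neq0; rewrite lt0r => /andP[n_neq0 _].
case: odisk; rewrite /domain_fn /mob_fn; first by rewrite normc2M normc2V; field.
by rewrite Im_mul Re_inv Im_inv Im_mul Re_conj Im_conj; move: n_neq0; coords => n_neq0; field.
Qed.

Lemma mob_fn_pole odisk z : c * z + d = 0 -> mob_fn odisk z <= 0.
Proof.
move=> q0; rewrite /mob_fn q0; case: odisk; last by rewrite rmorph0 mulr0 Im0.
by rewrite /normc2 Re0 Im0 expr0n addr0 sub0r oppr_le0 normc2_ge0.
Qed.

End MobiusForm.

Lemma mobius_positivity gdisk odisk (f : C -> C) :
  mobius_onto (domain gdisk) (domain odisk) f ->
  exists a b c d : C, [/\ a * d - b * c != 0,
    forall z, domain gdisk z -> c * z + d != 0 /\ f z = (a * z + b) / (c * z + d)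
  & forall z, domain gdisk z <-> 0 < mob_fn a b c d odisk z].
Proof.
move=> [[a [b [c [d [det_neq0 f_eq]]]]] [f_maps _ f_onto]].
exists a, b, c, d; split => // z; split => [z_in | pos].
  have [q_neq0 fz] := f_eq z z_in.
  rewrite -domain_fn_mobius // mulr_gt0 ?normc2_gt0 // -domainE -fz.
  exact: f_maps.
have [q0|q_neq0] := eqVneq (c * z + d) 0.
  by have := mob_fn_pole a b odisk q0; lra.
have : domain odisk ((a * z + b) / (c * z + d)).
  by rewrite domainE -(pmulr_lgt0 _ (normc2_gt0 q_neq0)) domain_fn_mobius.
case/f_onto => z' z'_in; have [q'_neq0 ->] := f_eq z' z'_in.
by move/mobius_inj => /(_ det_neq0 q'_neq0 q_neq0) <-.
Qed.

(* Its positivity set forces [mob_fn] to be a positive multiple of [domain_fn gdisk];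
   comparing discriminants ([mob_disc]) determines the multiple. *)
Lemma mob_fn_domain_fn gdisk odisk (a b c d : C) :
  (forall z, domain gdisk z <-> 0 < mob_fn a b c d odisk z) ->
  exists2 lam, 0 < lam & (forall z, mob_fn a b c d odisk z = lam * domain_fn gdisk z)
    /\ kappa odisk * lam ^+ 2 = kappa gdisk * normc2 (a * d - b * c).
Proof.
move=> pos; have disc := mob_disc a b c d odisk.
have cartesian z : z = (Re z +i* Im z)%C by case: z.
pose P x y := mobA a c odisk * (x ^+ 2 + y ^+ 2) + mobB a b c d odisk * x
  + mobC a b c d odisk * y + mobD b d odisk.
case: gdisk pos => pos.
  have /disk_positivity [B0 C0 AD D_gt0] : forall x y, x ^+ 2 + y ^+ 2 < 1 <-> 0 < P x y.
    by move=> x y; rewrite /P -mob_fnE -pos domainE /domain_fn subr_gt0 /normc2 Re_cplx Im_cplx.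
  exists (mobD b d odisk) => //; split; last by move: disc; rewrite B0 C0 AD /kappa; lra.
  by move=> z; rewrite [z]cartesian mob_fnE B0 C0 AD /domain_fn /normc2 Re_cplx Im_cplx; ring.
have /halfplane_positivity [A0 B0 D0 C_gt0] : forall x y, 0 < y <-> 0 < P x y.
  by move=> x y; rewrite /P -mob_fnE -pos domainE /domain_fn Im_cplx.
exists (mobC a b c d odisk) => //; split; last by move: disc; rewrite A0 B0 D0 /kappa; lra.
by move=> z; rewrite [z]cartesian mob_fnE A0 B0 D0 /domain_fn Im_cplx; ring.
Qed.

Lemma thrho_mobius gdisk odisk f z1 z2 : mobius_onto (domain gdisk) (domain odisk) f ->
  domain gdisk z1 -> domain gdisk z2 -> thrho odisk (f z1) (f z2) = thrho gdisk z1 z2.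
Proof.
move=> f_mob z1_in z2_in.
have [a [b [c [d [det_neq0 f_eq pos]]]]] := mobius_positivity f_mob.
have [lam lam_gt0 [mob_eq kappa_eq]] := mob_fn_domain_fn pos.
have [q1 ->] := f_eq z1 z1_in; have [q2 ->] := f_eq z2 z2_in.
have N1 := normc2_gt0 q1; have N2 := normc2_gt0 q2.
have fn_eq z : c * z + d != 0 ->
    domain_fn odisk ((a * z + b) / (c * z + d)) = lam * domain_fn gdisk z / normc2 (c * z + d).
  by move=> q; rewrite -mob_eq -domain_fn_mobius // mulfK // gt_eqF // normc2_gt0.
apply: (thrho_scale (k := normc2 (a * d - b * c) / (normc2 (c * z1 + d) * normc2 (c * z2 + d)))).
- by rewrite divr_gt0 ?mulr_gt0 ?normc2_gt0.
- rewrite mobius_sub // !normc2M normc2V normc2M; field.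
  by rewrite !gt_eqF.
rewrite !fn_eq //; have -> : forall x y u v : R, kappa odisk * (lam * x / u * (lam * y / v))
    = kappa odisk * lam ^+ 2 * (x * y) / (u * v) by move=> *; rewrite invfM expr2; ring.
by rewrite kappa_eq; field; rewrite !gt_eqF.
Qed.

End HyperbolicDomains.

Arguments domain {R} disk.

Theorem proposition4p5 (R : realType) (Gdisk Odisk : bool) (f : R[i] -> R[i])
    (p : \bar R) :
  let G := if Gdisk then @unit_disk R else @upper_half_plane R in
  let Om := if Odisk then @unit_disk R else @upper_half_plane R in
  let L : R := if Gdisk then powR 2 (2 - inv_ext p) else powR 2 (1 - inv_ext p) in
  mobius_onto G Om f ->
  (1 <= p)%E ->
  forall z1 z2 : R[i], G z1 -> G z2 ->
    bGp Om p (f z1) (f z2) <= L * bGp G p z1 z2.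
Proof.
move=> G Om L f_mob p_ge1 z1 z2 z1_in z2_in.
change (bGp (domain Odisk) p (f z1) (f z2) <= L * bGp (domain Gdisk) p z1 z2).
have [_ [f_maps _ _]] := f_mob.
have fz1_in : domain Odisk (f z1) by exact: f_maps.
have fz2_in : domain Odisk (f z2) by exact: f_maps.
apply: le_trans (bGp_le_thrho p_ge1 fz1_in fz2_in) _.
rewrite (thrho_mobius f_mob z1_in z2_in).
apply: le_trans (ler_wpM2l (powR_ge0 _ _) (thrho_le_bGp p_ge1 z1_in z2_in)) _.
suff <- : powR 2 (1 - inv_ext p) * (if Gdisk then 2 else 1) = L by rewrite mulrA.
rewrite /L; case: (Gdisk); last exact: mulr1.
have -> : 2 - inv_ext p = 1 + (1 - inv_ext p) by rewrite addrA.
by rewrite [RHS]powRD ?pnatr_eq0 ?implybT // powRr1 // mulrC.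
Qed.
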